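(* Let $B>0$, $C>0$ and $\gamma\in[0,1]$ be fixed. For $\alpha\in[0,1/2]$ define $$b_{a}(\alpha)=\frac{\left(-2\alpha^4+5\alpha^3-4\alpha^2+\alpha\right)\gamma+4\alpha^4-9\alpha^3+4\alpha^2}{2\alpha^3-4\alpha^2+1},$$ $$b_{h}(\alpha)=\frac{\left(2\alpha^4-5\alpha^3+4\alpha^2-\alpha\right)\gamma-4\alpha^4+10\alpha^3-6\alpha^2-\alpha+1}{2\alpha^3-4\alpha^2+1},$$ and set $B_{\mathrm{attacker}}(\alpha)=B\,b_a(\alpha)$, $B_{\mathrm{honest}}(\alpha)=B\,b_h(\alpha)$. Let $f(\alpha)=\frac{\alpha\,B_{\mathrm{honest}}(\alpha)}{(1-\alpha)\left(B_{\mathrm{attacker}}(\alpha)+B_{\mathrm{honest}}(\alpha)\right)}$ for $\alpha\in[0,1/2]$, and let $M_{\max}=\frac{B}{C}\max_{\alpha\in[0,1/2]}f(\alpha)$. For $M>0$ and $H>0$ let $\alpha=\frac{M}{H+M}$ and define $$\mathcal{U}^S(H)=B\,\frac{B_{\mathrm{honest}}(\alpha)}{(1-\alpha)B}\cdot\frac{B}{\left(B_{\mathrm{attacker}}(\alpha)+B_{\mathrm{honest}}(\alpha)\right)(H+M)}-C.$$ Call $H^*$ an equilibrium if $H^*>M$ and $\mathcal{U}^S(H^* )=0$. Then for every $M$ with $0<M<M_{\max}$ there are exactly two equilibria $H^*_1<H^*_2$, where $H^*_2$ is stable and $H^*_1$ is unstable.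
   Context: Model of selfish mining (in the sense of Eyal and Sirer) with elastic hash supply: $B$ is the expected block reward, $C$ the cost per unit hash rate per block interval, $H$ the honest miners' total hash rate, $M$ the attacking pool's hash rate, $\gamma$ the fraction of honest miners mining on the attacker's block during a tie, and $\mathcal{U}^S(H)$ the honest miners' per-hash-rate profit under attack. Honest miners enter when profit is positive and leave when it is negative. An equilibrium $H^*$ is stable if there is $\varepsilon>0$ such that $\mathcal{U}^S(H)>0$ for $H\in(H^*-\varepsilon,H^* )$ and $\mathcal{U}^S(H)<0$ for $H\in(H^*,H^*+\varepsilon)$ (so perturbations are driven back to $H^*$); it is unstable if instead $\mathcal{U}^S(H)<0$ for $H\in(H^*-\varepsilon,H^* )$ and $\mathcal{U}^S(H)>0$ for $H\in(H^*,H^*+\varepsilon)$. *)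

From Stdlib Require Import Reals Lra.
Open Scope R_scope.

Definition b_a (g a : R) : R :=
  ((-2*a^4 + 5*a^3 - 4*a^2 + a) * g + 4*a^4 - 9*a^3 + 4*a^2)
  / (2*a^3 - 4*a^2 + 1).

Definition b_h (g a : R) : R :=
  ((2*a^4 - 5*a^3 + 4*a^2 - a) * g - 4*a^4 + 10*a^3 - 6*a^2 - a + 1)
  / (2*a^3 - 4*a^2 + 1).

Definition B_attacker (B g a : R) : R := B * b_a g a.
Definition B_honest (B g a : R) : R := B * b_h g a.

Definition f (B g a : R) : R :=
  a * B_honest B g a / ((1 - a) * (B_attacker B g a + B_honest B g a)).

Definition is_max_f (B g fmax : R) : Prop :=
  (exists a, 0 <= a <= 1/2 /\ f B g a = fmax) /\
  (forall a, 0 <= a <= 1/2 -> f B g a <= fmax).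

Definition US (B C g M H : R) : R :=
  let a := M / (H + M) in
  B * (B_honest B g a / ((1 - a) * B))
    * (B / ((B_attacker B g a + B_honest B g a) * (H + M))) - C.

Definition equilibrium (B C g M H : R) : Prop :=
  H > M /\ US B C g M H = 0.

Definition stable_eq (B C g M Hs : R) : Prop :=
  exists eps, eps > 0 /\
    (forall H, Hs - eps < H < Hs -> US B C g M H > 0) /\
    (forall H, Hs < H < Hs + eps -> US B C g M H < 0).

Definition unstable_eq (B C g M Hs : R) : Prop :=
  exists eps, eps > 0 /\
    (forall H, Hs - eps < H < Hs -> US B C g M H < 0) /\
    (forall H, Hs < H < Hs + eps -> US B C g M H > 0).

From Stdlib Require Import Reals Ranalysis5 Lra Psatz.
From Coquelicot Require Import Coquelicot.
Open Scope R_scope.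

(* After cancelling B and the common denominator 2a^3 - 4a^2 + 1, the profit is
   U^S(H) = (B/M) f(alpha) - C with alpha = M/(H+M), and alpha is a decreasing
   bijection from (M, oo) onto (0, 1/2).  The reduced f vanishes at 0 and 1/2
   and is unimodal on [0, 1/2]: the numerator of f' is strictly decreasing there,
   so it changes sign once, at the maximiser r.  As 0 < CM/B < f_max = f(r),
   the level CM/B is crossed exactly at a1 < r < a2, and U^S > 0 exactly for
   alpha in (a1, a2), i.e. for H between H1 = M/a2 - M and H2 = M/a1 - M, while
   U^S < 0 on the rest of (M, oo). *)

Lemma continuity_pt_of_is_derive (h : R -> R) x l :
  is_derive h x l -> continuity_pt h x.
Proof.
  intros Hd. apply derivable_continuous_pt. exists l. now apply is_derive_Reals.
Qed.

Lemma is_derive_pos_lt (h h' : R -> R) x y : x < y ->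
  (forall c, x <= c <= y -> is_derive h c (h' c)) ->
  (forall c, x < c < y -> 0 < h' c) -> h x < h y.
Proof.
  intros Hxy Hd Hpos.
  destruct (MVT_cor2 h h' x y Hxy) as [c [Hc Hcxy]].
  { intros c Hc. now apply is_derive_Reals, Hd. }
  specialize (Hpos c Hcxy). nra.
Qed.

Lemma is_derive_neg_lt (h h' : R -> R) x y : x < y ->
  (forall c, x <= c <= y -> is_derive h c (h' c)) ->
  (forall c, x < c < y -> h' c < 0) -> h y < h x.
Proof.
  intros Hxy Hd Hneg.
  destruct (MVT_cor2 h h' x y Hxy) as [c [Hc Hcxy]].
  { intros c Hc. now apply is_derive_Reals, Hd. }
  specialize (Hneg c Hcxy). nra.
Qed.

Section UnimodalLevel.

Variables (h : R -> R) (lo r hi c : R).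
Hypothesis r_mid : lo <= r <= hi.
Hypothesis h_cont : forall x, lo <= x <= hi -> continuity_pt h x.
Hypothesis h_incr : forall x y, lo <= x -> x < y -> y <= r -> h x < h y.
Hypothesis h_decr : forall x y, r <= x -> x < y -> y <= hi -> h y < h x.

Lemma unimodal_le_peak x : lo <= x <= hi -> h x <= h r.
Proof.
  intros Hx. destruct (Rtotal_order x r) as [Hxr | [-> | Hrx]].
  - left. apply h_incr; lra.
  - lra.
  - left. apply h_decr; lra.
Qed.

Hypotheses (h_lo : h lo < c) (h_hi : h hi < c) (h_peak : c < h r).

Lemma unimodal_level_crossings : exists a1 a2,
  lo < a1 < r /\ r < a2 < hi /\
  (forall a, lo <= a <= hi -> (c < h a <-> a1 < a < a2)) /\
  (forall a, lo <= a <= hi -> (h a = c <-> a = a1 \/ a = a2)).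
Proof.
  assert (Hlr : lo < r) by (destruct (Req_dec lo r) as [<-|]; lra).
  assert (Hrh : r < hi) by (destruct (Req_dec r hi) as [<-|]; lra).
  assert (Hc_cont : forall x, continuity_pt (fun _ => c) x)
    by (intros x; apply continuity_pt_const; intros ? ?; reflexivity).
  destruct (IVT_interv (fun a => h a - c) lo r) as [a1 [Ha1 Ha1c]];
    [intros; apply continuity_pt_minus; [apply h_cont; lra | easy] | lra | lra | lra |].
  destruct (IVT_interv (fun a => c - h a) r hi) as [a2 [Ha2 Ha2c]];
    [intros; apply continuity_pt_minus; [easy | apply h_cont; lra] | lra | lra | lra |].
  assert (a1 <> lo) by (intros ->; lra).
  assert (a1 <> r) by (intros ->; lra).
  assert (a2 <> r) by (intros ->; lra).
  assert (a2 <> hi) by (intros ->; lra).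
  assert (Hbelow : forall a, lo <= a <= hi -> a < a1 \/ a2 < a -> h a < c).
  { intros a Ha [Haa | Haa].
    - replace c with (h a1) by lra. apply h_incr; lra.
    - replace c with (h a2) by lra. apply h_decr; lra. }
  assert (Habove : forall a, a1 < a < a2 -> c < h a).
  { intros a Ha. destruct (Rle_lt_dec a r).
    - replace c with (h a1) by lra. apply h_incr; lra.
    - replace c with (h a2) by lra. apply h_decr; lra. }
  assert (Hcases : forall a, (a < a1 \/ a2 < a) \/ (a = a1 \/ a = a2) \/ a1 < a < a2).
  { intros a. destruct (Rtotal_order a a1) as [| [|]], (Rtotal_order a a2) as [| [|]]; lra. }
  exists a1, a2. split; [lra | split; [lra | split]].
  - intros a Ha. destruct (Hcases a) as [Hout | [Hon | Hin]].
    + specialize (Hbelow a Ha Hout). lra.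
    + destruct Hon as [-> | ->]; lra.
    + specialize (Habove a Hin). lra.
  - intros a Ha. destruct (Hcases a) as [Hout | [Hon | Hin]].
    + specialize (Hbelow a Ha Hout). lra.
    + destruct Hon as [-> | ->]; lra.
    + specialize (Habove a Hin). lra.
Qed.

End UnimodalLevel.

Definition f_num (g a : R) : R := a * (1 - 2*a) * (1 + (2 - g) * a * (1 - a)).
Definition f_den (a : R) : R := a^3 - 2*a^2 - a + 1.
(* b_a + b_h has numerator f_den, and b_h has numerator (1-a) f_num / a, so
   the factor B and the denominator of b_a, b_h cancel in f (f_eq_f_red). *)
Definition f_red (g a : R) : R := f_num g a / f_den a.

Definition f_slope_num (g a : R) : R :=
  (1 - 4*a + 4*a^2 - 2*a^3 + 2*a^4)
  + (2 - g) * (2*a - 10*a^2 + 14*a^3 - a^4 - 8*a^5 + 2*a^6).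
Definition f_slope_num_deriv (g a : R) : R :=
  (-4 + 8*a - 6*a^2 + 8*a^3)
  + (2 - g) * (2 - 20*a + 42*a^2 - 4*a^3 - 40*a^4 + 12*a^5).

Lemma b_den_pos a : 0 <= a <= 1/2 -> 0 < 2*a^3 - 4*a^2 + 1.
Proof. intros Ha. nra. Qed.

Lemma f_den_pos a : 0 <= a <= 1/2 -> 0 < f_den a.
Proof. intros Ha. unfold f_den. nra. Qed.

Lemma B_attacker_add_honest B g a : 0 <= a <= 1/2 ->
  B_attacker B g a + B_honest B g a = B * f_den a / (2*a^3 - 4*a^2 + 1).
Proof.
  intros Ha. pose proof (b_den_pos a Ha).
  unfold B_attacker, B_honest, b_a, b_h, f_den. field. lra.
Qed.

Lemma B_honest_factor B g a : 0 <= a <= 1/2 ->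
  B_honest B g a =
  B * ((1 - 2*a) * (1 - a) * (1 + (2 - g) * a * (1 - a))) / (2*a^3 - 4*a^2 + 1).
Proof.
  intros Ha. pose proof (b_den_pos a Ha).
  unfold B_honest, b_h. field. lra.
Qed.

Lemma f_eq_f_red B g a : 0 < B -> 0 <= a <= 1/2 -> f B g a = f_red g a.
Proof.
  intros HB Ha. pose proof (b_den_pos a Ha). pose proof (f_den_pos a Ha).
  unfold f. rewrite B_attacker_add_honest, B_honest_factor by lra.
  unfold f_red, f_num. field. repeat split; lra.
Qed.

Lemma alpha_bounds M H : 0 < M -> M < H -> 0 < M / (H + M) < 1/2.
Proof.
  intros HM HH. split.
  - apply Rdiv_lt_0_compat; lra.
  - apply Rlt_div_l; lra.
Qed.

Lemma lt_alpha_iff M H a : 0 < M -> 0 < a -> 0 < H + M ->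
  (a < M / (H + M) <-> H < M / a - M).
Proof.
  intros HM Ha HHM.
  rewrite <- Rlt_div_r by lra.
  assert (HMa : M / a * a = M) by (field; lra).
  split; intros; nra.
Qed.

Lemma alpha_lt_iff M H a : 0 < M -> 0 < a -> 0 < H + M ->
  (M / (H + M) < a <-> M / a - M < H).
Proof.
  intros HM Ha HHM.
  rewrite Rlt_div_l by lra.
  assert (HMa : M / a * a = M) by (field; lra).
  split; intros; nra.
Qed.

Lemma alpha_eq_iff M H a : 0 < M -> 0 < a -> 0 < H + M ->
  (M / (H + M) = a <-> H = M / a - M).
Proof.
  intros HM Ha HHM. split; intros Heq.
  - rewrite <- Heq. field. lra.
  - rewrite Heq. field. lra.
Qed.

Lemma is_derive_f_red g x : f_den x <> 0 ->
  is_derive (f_red g) x (f_slope_num g x / f_den x ^ 2).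
Proof.
  intros Hx. unfold f_red, f_num, f_den, f_slope_num in *.
  auto_derive; [exact Hx |]. field. exact Hx.
Qed.

Lemma is_derive_f_slope_num g x : is_derive (f_slope_num g) x (f_slope_num_deriv g x).
Proof. unfold f_slope_num, f_slope_num_deriv. auto_derive; [easy | ring]. Qed.

Lemma f_slope_num_deriv_neg g a : 0 <= g <= 1 -> 0 < a <= 1/2 ->
  f_slope_num_deriv g a < 0.
Proof.
  intros Hg Ha. unfold f_slope_num_deriv.
  assert (a^2 <= a/2) by nra. assert (a^3 <= a^2/2) by nra.
  assert (a^4 <= a^3/2) by nra. assert (a^5 <= a^4/2) by nra.
  nra.
Qed.

Lemma f_slope_num_sign g : 0 <= g <= 1 -> exists r, 0 < r < 1/2 /\
  (forall a, 0 <= a < r -> 0 < f_slope_num g a) /\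
  (forall a, r < a <= 1/2 -> f_slope_num g a < 0).
Proof.
  intros Hg.
  assert (Hdecr : forall x y, 0 <= x -> x < y -> y <= 1/2 ->
            f_slope_num g y < f_slope_num g x).
  { intros x y Hx Hxy Hy.
    apply (is_derive_neg_lt _ (f_slope_num_deriv g)); [exact Hxy | |].
    - intros c _. apply is_derive_f_slope_num.
    - intros c Hc. apply f_slope_num_deriv_neg; lra. }
  destruct (IVT_interv (fun a => - f_slope_num g a) 0 (1/2)) as [r [Hr Hr0]];
    [| lra | unfold f_slope_num; lra | unfold f_slope_num; lra |].
  { intros a _. apply continuity_pt_opp.
    exact (continuity_pt_of_is_derive _ _ _ (is_derive_f_slope_num g a)). }
  assert (r <> 0) by (intros ->; unfold f_slope_num in Hr0; lra).
  assert (r <> 1/2) by (intros ->; unfold f_slope_num in Hr0; lra).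
  exists r. split; [lra | split].
  - intros a Ha. specialize (Hdecr a r). lra.
  - intros a Ha. specialize (Hdecr r a). lra.
Qed.

Lemma f_red_unimodal g : 0 <= g <= 1 -> exists r, 0 < r < 1/2 /\
  (forall x y, 0 <= x -> x < y -> y <= r -> f_red g x < f_red g y) /\
  (forall x y, r <= x -> x < y -> y <= 1/2 -> f_red g y < f_red g x).
Proof.
  intros Hg. destruct (f_slope_num_sign g Hg) as [r [Hr [Hpos Hneg]]].
  set (slope c := f_slope_num g c / f_den c ^ 2).
  assert (Hd : forall c, 0 <= c <= 1/2 -> is_derive (f_red g) c (slope c)).
  { intros c Hc. apply is_derive_f_red.
    pose proof (f_den_pos c ltac:(lra)). lra. }
  exists r. split; [exact Hr | split].
  - intros x y Hx Hxy Hy.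
    apply (is_derive_pos_lt _ slope x y Hxy); [intros c Hc; apply Hd; lra |].
    intros c Hc. pose proof (f_den_pos c ltac:(lra)).
    apply Rdiv_lt_0_compat; [apply Hpos; lra | apply pow_lt; lra].
  - intros x y Hx Hxy Hy.
    apply (is_derive_neg_lt _ slope x y Hxy); [intros c Hc; apply Hd; lra |].
    intros c Hc. pose proof (f_den_pos c ltac:(lra)).
    apply Rdiv_neg_pos; [apply Hneg; lra | apply pow_lt; lra].
Qed.

Lemma f_red_continuity_pt g x : 0 <= x <= 1/2 -> continuity_pt (f_red g) x.
Proof.
  intros Hx. pose proof (f_den_pos x Hx).
  apply (continuity_pt_of_is_derive _ _ _ (is_derive_f_red g x ltac:(lra))).
Qed.

Lemma US_eq_f_red B C g M H : 0 < B -> 0 < M -> M < H ->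
  US B C g M H = B / M * f_red g (M / (H + M)) - C.
Proof.
  intros HB HM HH. unfold US. cbv zeta.
  pose proof (alpha_bounds M H HM HH) as Ha.
  set (a := M / (H + M)) in *.
  assert (HHM : H + M = M / a) by (unfold a; field; lra).
  pose proof (b_den_pos a ltac:(lra)). pose proof (f_den_pos a ltac:(lra)).
  rewrite B_attacker_add_honest, B_honest_factor, HHM by lra.
  unfold f_red, f_num. field. repeat split; lra.
Qed.

Lemma US_factor B C g M H : 0 < B -> 0 < M -> M < H ->
  US B C g M H = B / M * (f_red g (M / (H + M)) - C * M / B).
Proof. intros HB HM HH. rewrite US_eq_f_red by lra. field. lra. Qed.

Lemma US_pos_iff B C g M H : 0 < B -> 0 < M -> M < H ->
  (0 < US B C g M H <-> C * M / B < f_red g (M / (H + M))).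
Proof.
  intros HB HM HH. rewrite US_factor by lra.
  assert (0 < B / M) by (apply Rdiv_lt_0_compat; lra).
  split; intros; nra.
Qed.

Lemma US_zero_iff B C g M H : 0 < B -> 0 < M -> M < H ->
  (US B C g M H = 0 <-> f_red g (M / (H + M)) = C * M / B).
Proof.
  intros HB HM HH. rewrite US_factor by lra.
  assert (0 < B / M) by (apply Rdiv_lt_0_compat; lra).
  split; intros Heq.
  - apply Rmult_integral in Heq. lra.
  - rewrite Heq. ring.
Qed.

Lemma US_sign_from_levels B C g M a1 a2 : 0 < B -> 0 < M -> 0 < a1 < a2 ->
  (forall a, 0 <= a <= 1/2 -> (C * M / B < f_red g a <-> a1 < a < a2)) ->
  (forall a, 0 <= a <= 1/2 -> (f_red g a = C * M / B <-> a = a1 \/ a = a2)) ->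
  forall H, M < H ->
    (0 < US B C g M H <-> M / a2 - M < H < M / a1 - M) /\
    (US B C g M H = 0 <-> H = M / a2 - M \/ H = M / a1 - M).
Proof.
  intros HB HM Ha12 Habove Hlevel H HH.
  pose proof (alpha_bounds M H HM HH) as Ha.
  split.
  - rewrite US_pos_iff, Habove, lt_alpha_iff, alpha_lt_iff by lra.
    split; intros; lra.
  - rewrite US_zero_iff, Hlevel, !alpha_eq_iff by lra.
    split; intros; lra.
Qed.

Section Equilibria.

Variables (B C g M H1 H2 : R).
Hypotheses (M_lt_H1 : M < H1) (H1_lt_H2 : H1 < H2).
Hypothesis US_pos : forall H, M < H -> (0 < US B C g M H <-> H1 < H < H2).
Hypothesis US_zero : forall H, M < H -> (US B C g M H = 0 <-> H = H1 \/ H = H2).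

Lemma US_neg_outside H : M < H -> H < H1 \/ H2 < H -> US B C g M H < 0.
Proof.
  intros HM Hout. specialize (US_pos H HM). specialize (US_zero H HM).
  destruct (Rtotal_order (US B C g M H) 0) as [| [|]]; [easy | ..]; exfalso.
  - destruct (proj1 US_zero); lra.
  - destruct (proj1 US_pos); lra.
Qed.

Lemma equilibrium_H1 : equilibrium B C g M H1.
Proof. split; [lra | apply US_zero; auto]. Qed.

Lemma equilibrium_H2 : equilibrium B C g M H2.
Proof. split; [lra | apply US_zero; lra]. Qed.

Lemma equilibrium_cases H : equilibrium B C g M H -> H = H1 \/ H = H2.
Proof. intros [HM HUS]. now apply US_zero. Qed.

Lemma stable_eq_H2 : stable_eq B C g M H2.
Proof.
  exists (H2 - H1). split; [lra | split]; intros H HH.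
  - apply US_pos; lra.
  - apply US_neg_outside; lra.
Qed.

Lemma unstable_eq_H1 : unstable_eq B C g M H1.
Proof.
  exists (Rmin (H1 - M) (H2 - H1)).
  pose proof (Rmin_l (H1 - M) (H2 - H1)) as Hl.
  pose proof (Rmin_r (H1 - M) (H2 - H1)) as Hr.
  split; [apply Rmin_pos; lra | split]; intros H HH.
  - apply US_neg_outside; lra.
  - apply US_pos; lra.
Qed.

End Equilibria.

Lemma equilibria_of_level_crossings B C g M a1 a2 :
  0 < B -> 0 < M -> 0 < a1 < a2 -> a2 < 1/2 ->
  (forall a, 0 <= a <= 1/2 -> (C * M / B < f_red g a <-> a1 < a < a2)) ->
  (forall a, 0 <= a <= 1/2 -> (f_red g a = C * M / B <-> a = a1 \/ a = a2)) ->
  exists H1 H2 : R,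
    H1 < H2 /\
    equilibrium B C g M H1 /\ equilibrium B C g M H2 /\
    (forall H, equilibrium B C g M H -> H = H1 \/ H = H2) /\
    stable_eq B C g M H2 /\ unstable_eq B C g M H1.
Proof.
  intros HB HM Ha12 Ha2 Habove Hlevel.
  pose proof (US_sign_from_levels B C g M a1 a2 HB HM Ha12 Habove Hlevel) as Hsign.
  set (H1 := M / a2 - M). set (H2 := M / a1 - M).
  assert (M_lt_H1 : M < H1).
  { unfold H1. apply Rlt_minus_l. rewrite <- Rlt_div_r by lra. nra. }
  assert (H1_lt_H2 : H1 < H2).
  { unfold H1, H2. apply Rplus_lt_compat_r, Rmult_lt_compat_l; [lra |].
    apply Rinv_lt_contravar; nra. }
  assert (US_pos : forall H, M < H -> (0 < US B C g M H <-> H1 < H < H2))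
    by (intros H HH; apply (Hsign H HH)).
  assert (US_zero : forall H, M < H -> (US B C g M H = 0 <-> H = H1 \/ H = H2))
    by (intros H HH; apply (Hsign H HH)).
  exists H1, H2. split; [exact H1_lt_H2 |].
  split; [exact (equilibrium_H1 B C g M H1 H2 M_lt_H1 US_zero) |].
  split; [exact (equilibrium_H2 B C g M H1 H2 M_lt_H1 H1_lt_H2 US_zero) |].
  split; [exact (equilibrium_cases B C g M H1 H2 US_zero) |].
  split; [exact (stable_eq_H2 B C g M H1 H2 M_lt_H1 H1_lt_H2 US_pos US_zero) |].
  exact (unstable_eq_H1 B C g M H1 H2 M_lt_H1 H1_lt_H2 US_pos US_zero).
Qed.

Theorem proposition1 :
  forall (B C g : R), 0 < B -> 0 < C -> 0 <= g <= 1 ->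
  forall fmax : R, is_max_f B g fmax ->
  forall M : R, 0 < M -> M < (B / C) * fmax ->
  exists H1 H2 : R,
    H1 < H2 /\
    equilibrium B C g M H1 /\ equilibrium B C g M H2 /\
    (forall H, equilibrium B C g M H -> H = H1 \/ H = H2) /\
    stable_eq B C g M H2 /\ unstable_eq B C g M H1.
Proof.
  intros B C g HB HC Hg fmax [[a0 [Ha0 <-]] _] M HM HMmax.
  rewrite f_eq_f_red in HMmax by lra.
  destruct (f_red_unimodal g Hg) as [r [Hr [Hincr Hdecr]]].
  assert (Hc : C * M / B < f_red g r).
  { apply Rlt_le_trans with (f_red g a0); [| now apply (unimodal_le_peak _ 0 r (1/2))].
    apply (Rmult_lt_compat_r C) in HMmax; [| exact HC].
    replace (B / C * f_red g a0 * C) with (f_red g a0 * B) in HMmax by (field; lra).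
    apply Rlt_div_l; lra. }
  assert (Hc0 : 0 < C * M / B) by (apply Rdiv_lt_0_compat; nra).
  destruct (unimodal_level_crossings (f_red g) 0 r (1/2) (C * M / B))
    as [a1 [a2 [Ha1 [Ha2 [Habove Hlevel]]]]];
    [lra | apply f_red_continuity_pt | exact Hincr | exact Hdecr
    | unfold f_red, f_num; lra | unfold f_red, f_num; lra | exact Hc |].
  apply (equilibria_of_level_crossings B C g M a1 a2); auto; lra.
Qed.
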